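(* Let $c$ be a real number with $0<c\leq 1/2$. There exists a sequence $(a_p)$ indexed by the prime numbers $p$, with each $a_p$ an integer satisfying $0\leq a_p<p$, such that for almost every $x\in[0,1]$ (with respect to Lebesgue measure), the set of primes $p$ with $$\Bigl|x-\frac{a_p}{p}\Bigr|\leq \frac{c}{p}$$ is infinite. *)

From HB Require Import structures.
From mathcomp Require Import all_boot all_order all_algebra.
From mathcomp Require Import all_classical all_reals all_analysis.

From HB Require Import structures.
From mathcomp Require Import all_boot all_order all_algebra.
From mathcomp Require Import all_classical all_reals all_analysis.
From mathcomp Require Import zify ring lra.
Import Order.TTheory GRing.Theory Num.Theory.

(* The sum of 1/p over the primes diverges, so every tail of it can pay for
   any finite length.  Sweeping an interval from left to right with the primes
   p >= S in turn, choose a_p so that the arc [(a_p - c)/p, (a_p + c)/p]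
   starts less than 1/p after the previous one ends: the uncovered gaps then
   make up at most 1/(1 + 2c) of the interval, up to an error O(1/S).  Doing
   this again on the gaps with later primes, n times, leaves a subset of
   [0, 1] of measure at most (1 + 2c)^-n + error, hence as small as we like.
   Concatenating such blocks of primes with leftover measure 1/(k + 1) for
   the k-th block defines a.  A point of [0, 1] with only finitely many good
   primes lies in the leftover sets of all blocks from some index N on, and
   for each N the intersection of these leftover sets is null. *)

Definition has_prime_factor_in (S N i : nat) :=
  has (fun p => prime p && (p %| i)) (index_iota S N.+1).

Lemma sum_has_prime_factor_in S N :
  \sum_(1 <= i < N.+1) has_prime_factor_in S N i
    <= \sum_(S <= p < N.+1 | prime p) N %/ p.
Proof.
apply: (@leq_trans (\sum_(1 <= i < N.+1) \sum_(S <= p < N.+1 | prime p) (p %| i))).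
  apply: leq_sum => i _; rewrite /has_prime_factor_in has_count -sum1_count big_mkcondr.
  rewrite (eq_bigr (fun p => p %| i : nat)) => [|p _]; last by case: (p %| i).
  by case: (\sum_(_ <= _ < _ | _) _).
by rewrite exchange_big_nat /=; apply: eq_leq; apply: eq_bigr => p _; rewrite divn_count_dvd.
Qed.

Lemma logn_leq_exp2 p i K : 0 < i -> i <= 2 ^ K -> logn p i <= K.
Proof.
move=> i0 iK; have [pp|np] := boolP (prime p); last by rewrite /logn (negPf np).
have pe_le : p ^ logn p i <= 2 ^ K.
  by apply: leq_trans iK; apply: dvdn_leq => //; exact: pfactor_dvdnn.
have e2_le : 2 ^ logn p i <= p ^ logn p i.
  by case: (logn p i) => [|l] //; rewrite leq_exp2r // prime_gt1.
by rewrite -(@leq_exp2l 2) //; apply: leq_trans e2_le pe_le.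
Qed.

(* An integer without prime factors in [S, 2^K] is determined by its
   exponents at the primes below S, each of which is at most K. *)
Lemma count_smooth_leq S K :
  \sum_(1 <= i < (2 ^ K).+1) ~~ has_prime_factor_in S (2 ^ K) i <= K.+1 ^ S.
Proof.
set N := 2 ^ K; set hpf := has_prime_factor_in S N.
have -> : \sum_(1 <= i < N.+1) ~~ hpf i = #|[set i : 'I_N.+1 | (0 < i) && ~~ hpf i]|.
  rewrite -sum1dep_card big_mkcondr.
  rewrite -(big_mkord (fun i => 0 < i) (fun i => if ~~ hpf i then 1 else 0)).
  rewrite [RHS]big_ltn_cond //= [RHS]big_mkcond /=.
  by apply: eq_big_nat => i /andP[-> _]; case: (hpf i).
pose f (i : 'I_N.+1) : {ffun 'I_S -> 'I_K.+1} := [ffun p : 'I_S => inord (logn p i)].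
rewrite -(card_in_imset (f := f)); last first.
  move=> i j; rewrite !inE => /andP[i0 si] /andP[j0 sj] fij.
  apply: val_inj; apply: eqn_from_log => // p.
  have [pS|pS] := ltnP p S.
    have := congr1 (fun g : {ffun 'I_S -> 'I_K.+1} => val (g (Ordinal pS))) fij.
    by rewrite /f !ffunE /= !inordK // ltnS logn_leq_exp2 // -ltnS.
  have logn0 (k : 'I_N.+1) : 0 < k -> ~~ hpf k -> logn p k = 0.
    move=> k0 sk; apply/eqP; rewrite eqn0Ngt logn_gt0 mem_primes k0 /=.
    apply/negP => /andP[pp pk]; move/negP: sk; apply; apply/hasP.
    exists p; last by rewrite pp pk.
    by rewrite mem_index_iota pS ltnS (leq_trans (dvdn_leq k0 pk)) // -ltnS.
  by rewrite !logn0.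
by apply: leq_trans (max_card _) _; rewrite card_ffun !card_ord.
Qed.

Lemma smooth_bound_leq_half S : 2 * (2 ^ (2 * S + 2)).+1 ^ S <= 2 ^ 2 ^ (2 * S + 2).
Proof.
set K := 2 ^ (2 * S + 2).
have le2K : K.+1 ^ S <= (2 * K) ^ S.
  have [->|S0] := posnP S; first by [].
  by rewrite leq_exp2r // -addn1 mul2n -addnn leq_add2l expn_gt0.
apply: leq_trans (_ : 2 ^ (1 + S + (2 * S + 2) * S) <= _).
  by rewrite -addnA expnD expn1 leq_mul2l /= expnD expnM -expnMn.
have S_lt : S < 2 ^ S := ltn_expl S (isT : 1 < 2).
have -> : K = 2 ^ S * 2 ^ S * 4 by rewrite /K (_ : 4 = 2 ^ 2) // -!expnD; f_equal; lia.
by rewrite leq_exp2l //; set a := 2 ^ S in S_lt *; nia.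
Qed.

Section Glue.
Variables (st : nat -> nat) (ak : nat -> nat -> nat).
Hypothesis st_lt : forall k, st k < st k.+1.

Definition block_index p := \max_(j < p.+1 | st j <= p) j.

Definition glue p := ak (block_index p) p.

Lemma leq_st k : k <= st k.
Proof. by elim: k => // k IH; exact: leq_ltn_trans IH (st_lt k). Qed.

Lemma glueE j p : st j <= p < st j.+1 -> glue p = ak j p.
Proof.
move=> /andP[jp pj]; rewrite /glue; congr ak; apply/eqP; rewrite eqn_leq.
have jp1 : j < p.+1 by rewrite ltnS (leq_trans (leq_st j)).
apply/andP; split; last exact: (leq_bigmax_cond (Ordinal jp1)).
apply/bigmax_leqP => i ip; rewrite leqNgt; apply/negP => ji.
have := homo_leq leqnn leq_trans (fun k => ltnW (st_lt k)) ji.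
by rewrite leqNgt (leq_ltn_trans ip pj).
Qed.

End Glue.

Arguments leq_st {st}.
Arguments glueE {st ak} st_lt {j p}.

Local Open Scope ring_scope.

Lemma negligible_bigcap_small d (T : measurableType d) (R : realType)
    (mu : {measure set T -> \bar R}) (U : nat -> set T) :
  (forall k, measurable (U k)) -> (forall e : R, 0 < e -> exists k, (mu (U k) <= e%:E)%E) ->
  mu.-negligible (\bigcap_k U k).
Proof.
move=> mU small; have mI : measurable (\bigcap_k U k) by apply: bigcapT_measurable.
apply/(negligibleP _ mI)/eqP; rewrite eq_le measure_ge0 andbT.
apply/lee_addgt0Pr => e e0; rewrite add0e; have [k muk] := small e e0.
by apply: le_trans muk; apply: le_measure; rewrite ?inE //; exact: bigcap_inf.
Qed.

Lemma exists_expr_le (R : realType) (r e : R) : 0 <= r < 1 -> 0 < e ->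
  exists n, r ^+ n <= e.
Proof.
move=> /andP[r0 r1] e0; have r_lt1 : `|r| < 1 by rewrite ger0_norm.
have /cvgrPdist_le /(_ _ e0) [N _ rN] := cvg_expr r_lt1.
by exists N; have := rN N (leqnn N); rewrite /= sub0r normrN ger0_norm // exprn_ge0.
Qed.

Section Covering.
Context {R : realType}.

(* Erdos: otherwise fewer than N/2 integers up to N = 2^K have a prime factor
   in [S, N], while at most (K + 1)^S <= N/2 have none. *)
Lemma prime_recip_tail_ge_half S :
  exists E, 2^-1 <= \sum_(S <= p < E | prime p) (p%:R : R)^-1.
Proof.
apply/not_existsP => small.
set K := (2 ^ (2 * S + 2))%N; set N := (2 ^ K)%N.
have N_le : (N <= \sum_(S <= p < N.+1 | prime p) N %/ p + K.+1 ^ S)%N.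
  have N_split : N = (\sum_(1 <= i < N.+1)
      (has_prime_factor_in S N i + ~~ has_prime_factor_in S N i))%N.
    rewrite (eq_bigr (fun=> 1%N)); last by move=> i _; case: (has_prime_factor_in _ _ _).
    by rewrite sum_nat_const_nat subn1 muln1.
  rewrite {1}N_split big_split /=; apply: leq_add; first exact: sum_has_prime_factor_in.
  exact: count_smooth_leq.
have : (N%:R : R) < N%:R / 2 + (K.+1 ^ S)%:R.
  apply: (@le_lt_trans _ _
    ((\sum_(S <= p < N.+1 | prime p) N %/ p)%N%:R + (K.+1 ^ S)%:R)).
    by rewrite -natrD ler_nat.
  rewrite ltrD2r natr_sum.
  apply: le_lt_trans (_ : _ <= \sum_(S <= p < N.+1 | prime p) N%:R * (p%:R : R)^-1) _.
    apply: ler_sum => p pp; rewrite ler_pdivlMr ?ltr0n ?prime_gt0 // -natrM ler_nat.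
    exact: leq_divM.
  rewrite -mulr_sumr ltr_pM2l ?ltr0n ?expn_gt0 // ltNge.
  by apply/negP; exact: small.
rewrite -ltrBlDl (_ : N%:R - N%:R / 2 = N%:R / 2 :> R); last by field.
rewrite ltr_pdivrMr // mulrC -natrM ltr_nat => lt.
by move: (smooth_bound_leq_half S); rewrite -/K -/N leqNgt lt.
Qed.

Lemma prime_recip_tail_unbounded (M : R) S :
  exists E, (S <= E)%N /\ M <= \sum_(S <= p < E | prime p) (p%:R : R)^-1.
Proof.
suff tail_nat (L : nat) : exists E, (S <= E)%N /\
    L%:R / 2 <= \sum_(S <= p < E | prime p) (p%:R : R)^-1.
  have [E [SE ME]] := tail_nat (Num.truncn (2 * M)).+1.
  exists E; split => //; apply: le_trans ME; rewrite ler_pdivlMr // mulrC.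
  exact/ltW/truncnS_gt.
elim: L => [|L [E1 [SE1 LE1]]]; first by exists S; rewrite big_geq // mul0r.
have [E2 halfE2] := prime_recip_tail_ge_half E1.
have E12 : (E1 <= E2)%N.
  rewrite leqNgt; apply/negP => lt; move: halfE2; rewrite big_geq ?(ltnW lt) //.
  by rewrite leNgt invr_gt0 ltr0n.
exists E2; split; first exact: leq_trans SE1 E12.
by rewrite (big_cat_nat SE1 E12) /= -natr1 mulrDl mul1r lerD.
Qed.

Definition in_intervals (L : seq (R * R)) (x : R) := has (fun g => g.1 <= x <= g.2) L.

Definition total_length (L : seq (R * R)) := \sum_(g <- L) (g.2 - g.1).

Definition unit_intervals (L : seq (R * R)) :=
  all (fun g => [&& 0 <= g.1, g.1 <= g.2 & g.2 <= 1]) L.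

Lemma in_intervals_cat L1 L2 x :
  in_intervals (L1 ++ L2) x = in_intervals L1 x || in_intervals L2 x.
Proof. exact: has_cat. Qed.

Local Open Scope classical_set_scope.

Lemma in_intervals_cons (g : R * R) L :
  [set x | in_intervals (g :: L) x] = [set` `[g.1, g.2]%R] `|` [set x | in_intervals L x].
Proof.
apply/seteqP; split => x /=; rewrite /in_intervals /= in_itv /=.
  by move=> /orP[gx|Lx]; [left | right].
by case=> [->|->] //; rewrite orbT.
Qed.

Lemma measurable_in_intervals L : measurable [set x | in_intervals L x].
Proof.
elim: L => [|g L IH].
  by rewrite (_ : [set x | in_intervals [::] x] = set0) //; apply/seteqP; split.
by rewrite in_intervals_cons; apply: measurableU => //; exact: measurable_itv.
Qed.

Lemma lebesgue_in_intervals_le L : unit_intervals L ->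
  (lebesgue_measure [set x | in_intervals L x] <= (total_length L)%:E)%E.
Proof.
elim: L => [_|g L IH /andP[/and3P[_ g12 _] unitL]].
  rewrite (_ : [set x | in_intervals [::] x] = set0); last by apply/seteqP; split.
  by rewrite measure0 /total_length big_nil.
rewrite in_intervals_cons /total_length big_cons EFinD.
have mg := measurable_itv `[g.1, g.2]%R.
apply: le_trans (measureU2 lebesgue_measure mg (measurable_in_intervals L)) _.
apply: leeD; last exact: IH.
have := lebesgue_measure_itv `[g.1, g.2]%R; rewrite /= => ->.
case: ifP => _; first by rewrite -EFinD.
by rewrite lee_fin subr_ge0.
Qed.

Local Close Scope classical_set_scope.

Lemma negligible_eventually_in_intervals {Lk : nat -> seq (R * R)} N :
  (forall k, unit_intervals (Lk k)) -> (forall k, total_length (Lk k) <= k.+1%:R^-1) ->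
  lebesgue_measure.-negligible (\bigcap_k [set x | in_intervals (Lk (N + k)%N) x])%classic.
Proof.
move=> unitL totL; apply: negligible_bigcap_small => [k|e e0].
  exact: measurable_in_intervals.
exists (Num.truncn e^-1); apply: le_trans (lebesgue_in_intervals_le _ (unitL _)) _.
rewrite lee_fin (le_trans (totL _)) // invf_ple ?posrE ?ltr0n // ltW //.
by rewrite (lt_le_trans (truncnS_gt _)) // ler_nat ltnS leq_addl.
Qed.

Section Approximation.
Variable c : R.
Hypothesis c_gt0 : 0 < c.

Definition approximated (a : nat -> nat) (S E : nat) (x : R) :=
  exists p, [/\ (S <= p < E)%N, prime p & `|x - (a p)%:R / p%:R| <= c / p%:R].

Definition covers (S E : nat) (a : nat -> nat) (L : seq (R * R)) (D : pred R) :=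
  [/\ (S <= E)%N, forall p, prime p -> (a p < p)%N, unit_intervals L &
      forall x, D x -> approximated a S E x \/ in_intervals L x].

Definition splice (E : nat) (a1 a2 : nat -> nat) p := if (p < E)%N then a1 p else a2 p.

Lemma approximated_widen {a S E S' E' x} : (S' <= S)%N -> (E <= E')%N ->
  approximated a S E x -> approximated a S' E' x.
Proof.
move=> S'S EE' [p [/andP[Sp pE] pp px]]; exists p; split => //.
by rewrite (leq_trans S'S Sp) (leq_trans pE EE').
Qed.

Lemma approximated_splicel {E1 E a1 a2 S x} : (E1 <= E)%N ->
  approximated a1 S E1 x -> approximated (splice E1 a1 a2) S E x.
Proof.
move=> E1E [p [/andP[Sp pE1] pp px]]; exists p.
by rewrite /splice pE1 Sp (leq_trans pE1 E1E).
Qed.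

Lemma approximated_splicer {E1 E a1 a2 S x} : (S <= E1)%N ->
  approximated a2 E1 E x -> approximated (splice E1 a1 a2) S E x.
Proof.
move=> SE1 [p [/andP[E1p pE] pp px]]; exists p.
by rewrite /splice (ltnNge p E1) E1p pE (leq_trans SE1 E1p).
Qed.

Lemma covers_widen {S E S' E' a L D} : (S' <= S)%N -> (E <= E')%N ->
  covers S E a L D -> covers S' E' a L D.
Proof.
move=> S'S EE' [SE red unitL cov]; split => //.
  by rewrite (leq_trans S'S) ?(leq_trans SE).
by move=> x /cov [/(approximated_widen S'S EE')|]; [left|right].
Qed.

Lemma covers_sub {S E a L} {D D' : pred R} :
  covers S E a L D -> (forall x, D' x -> D x) -> covers S E a L D'.
Proof. by move=> [SE red unitL cov] D'D; split => // x /D'D /cov. Qed.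

Lemma covers_by_intervals S E L (D : pred R) : (S <= E)%N -> unit_intervals L ->
  (forall x, D x -> in_intervals L x) -> covers S E (fun=> 0%N) L D.
Proof. by move=> SE unitL DL; split => // [p /prime_gt0|x /DL]; [|right]. Qed.

Lemma covers_interval S E t v : (S <= E)%N -> 0 <= t <= v -> v <= 1 ->
  covers S E (fun=> 0%N) [:: (t, v)] (fun x => t <= x <= v).
Proof.
move=> SE /andP[t0 tv] v1; apply: covers_by_intervals => // [|x tvx].
  by rewrite /unit_intervals /= t0 tv v1.
by rewrite /in_intervals /= tvx.
Qed.

Lemma splice_reduced E a1 a2 : (forall p, prime p -> (a1 p < p)%N) ->
  (forall p, prime p -> (a2 p < p)%N) -> forall p, prime p -> (splice E a1 a2 p < p)%N.
Proof.
by move=> red1 red2 p pp; rewrite /splice; case: ifP => _; [exact: red1 | exact: red2].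
Qed.

Lemma covers_trans {S E1 E a1 a2 L1 L2 D} : covers S E1 a1 L1 D ->
  covers E1 E a2 L2 (in_intervals L1) -> covers S E (splice E1 a1 a2) L2 D.
Proof.
move=> [SE1 red1 _ cov1] [E1E red2 unitL2 cov2]; split => //.
- exact: leq_trans SE1 E1E.
- exact: splice_reduced.
move=> x /cov1 [/(approximated_splicel E1E)|/cov2 [/(approximated_splicer SE1)|]];
  by [left | right].
Qed.

Lemma covers_cat {S E1 E a1 a2 L1 L2 D1 D2} : covers S E1 a1 L1 D1 ->
  covers E1 E a2 L2 D2 -> covers S E (splice E1 a1 a2) (L1 ++ L2) (predU D1 D2).
Proof.
move=> [SE1 red1 unitL1 cov1] [E1E red2 unitL2 cov2]; split.
- exact: leq_trans SE1 E1E.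
- exact: splice_reduced.
- by rewrite /unit_intervals all_cat; apply/andP.
move=> x /orP[/cov1|/cov2] [ax|Lx]; rewrite ?in_intervals_cat ?Lx ?orbT; try by right.
  by left; exact: approximated_splicel ax.
by left; exact: approximated_splicer ax.
Qed.

Lemma exists_next_fraction S t : (0 < S)%N -> 0 <= t ->
  exists k : nat, t < (k.+1%:R - c) / S%:R <= t + S%:R^-1.
Proof.
move=> S0 t0; have S0' : 0 < (S%:R : R) by rewrite ltr0n.
have /andP[kl ku] := truncn_itv (addr_ge0 (mulr_ge0 (ler0n R S) t0) (ltW c_gt0)).
exists (Num.truncn (S%:R * t + c)); rewrite ltr_pdivlMr // ler_pdivrMr //.
by rewrite mulrDl mulVf ?gt_eqF // (mulrC t); move: kl ku; rewrite -natr1; lra.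
Qed.

Lemma covers_fraction p k t : prime p ->
  0 <= t <= (k.+1%:R - c) / p%:R -> (k.+1%:R + c) / p%:R <= 1 ->
  covers p p.+1 (fun q => if q == p then k.+1 else 0%N)
    [:: (t, (k.+1%:R - c) / p%:R)] (fun x => t <= x <= (k.+1%:R + c) / p%:R).
Proof.
move=> pp /andP[t0 ts] e1; have p0 : 0 < (p%:R : R) by rewrite ltr0n prime_gt0.
have se : (k.+1%:R - c) / p%:R <= (k.+1%:R + c) / p%:R.
  by rewrite ler_pM2r ?invr_gt0 //; have := c_gt0; lra.
split => //.
- move=> q qp; case: eqP => [->|_]; last exact: prime_gt0.
  by rewrite -(ltr_nat R); have := c_gt0; move: e1; rewrite ler_pdivrMr // mul1r; lra.
- by rewrite /unit_intervals /= t0 ts (le_trans se e1).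
move=> x /andP[tx xe]; case: (lerP x ((k.+1%:R - c) / p%:R)) => xs.
  by right; rewrite /in_intervals /= tx xs.
left; exists p; split; rewrite ?leqnn ?ltnSn ?eqxx //.
by move: xs xe; rewrite !mulrBl !mulrDl ler_norml; lra.
Qed.

Lemma gap_leq_fraction (g w : R) : g <= w -> g <= (g + 2 * c * w) / (1 + 2 * c).
Proof. by move=> gw; have c0 := c_gt0; rewrite ler_pdivlMr; [nra | lra]. Qed.

(* The greedy step: a_S/S is the first fraction whose arc starts after t, so
   the gap [t, s] before the arc [s, e] is shorter than 1/S. *)
Lemma sweep n S t v : (0 < S)%N -> 0 <= t <= v -> v <= 1 ->
  v - t <= \sum_(S <= p < S + n | prime p) 2 * c / p%:R ->
  exists a L, covers S (S + n) a L (fun x => t <= x <= v) /\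
    total_length L <= (v - t) / (1 + 2 * c) + (1 + 2 * c) / S%:R.
Proof.
have D0 : 0 < 1 + 2 * c by have := c_gt0; lra.
elim: n S t v => [|n IH] S t v S0 tv v1 hsum; have /andP[t0 t_le_v] := tv.
  rewrite addn0 in hsum *; rewrite big_geq // in hsum; exists (fun=> 0%N), [:: (t, v)].
  split; first exact: covers_interval.
  rewrite /total_length big_seq1; apply: le_trans hsum _.
  by rewrite addr_ge0 ?divr_ge0 ?subr_ge0 // ltW.
have S0' : 0 < (S%:R : R) by rewrite ltr0n.
have err_le : (1 + 2 * c) / S.+1%:R <= (1 + 2 * c) / S%:R.
  by rewrite ler_pM2l // lef_pV2 ?posrE ?ltr0n // ler_nat.
rewrite -addSnnS in hsum *; rewrite big_ltn_cond ?leq_addr // in hsum.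
case: (boolP (prime S)) => pS in hsum *; rewrite /= in hsum; last first.
  have [a [L [cov tot]]] := IH S.+1 t v isT tv v1 hsum.
  exists a, L; split; first exact: covers_widen (leqnSn S) (leqnn _) cov.
  by apply: le_trans tot _; rewrite lerD2l.
have [k /andP[ts sS]] := exists_next_fraction S t S0 t0.
set s := (k.+1%:R - c) / S%:R in ts sS *; set e := (k.+1%:R + c) / S%:R.
have es : e = s + 2 * c / S%:R by rewrite /e /s -mulrDl; congr (_ * _); ring.
have cS : 0 < 2 * c / S%:R by rewrite divr_gt0 // mulr_gt0.
case: (ltrP v e) => [ve|ev].
  exists (fun=> 0%N), [:: (t, v)]; split.
    by apply: covers_interval => //; rewrite ltnW // leq_addr.
  rewrite /total_length big_seq1 /=.
  have : 0 <= (v - t) / (1 + 2 * c) by rewrite divr_ge0 ?subr_ge0 // ltW.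
  have : (1 + 2 * c) / S%:R = S%:R^-1 + 2 * c / S%:R by rewrite mulrDl mul1r.
  lra.
have ev' : 0 <= e <= v by rewrite ev andbT; lra.
have hsum' : v - e <= \sum_(S.+1 <= p < S.+1 + n | prime p) 2 * c / p%:R by lra.
have [a [L [cov tot]]] := IH S.+1 e v isT ev' v1 hsum'.
exists (splice S.+1 (fun q => if q == S then k.+1 else 0%N) a), ((t, s) :: L); split.
  have ts' : 0 <= t <= s by rewrite t0 ltW.
  apply: covers_sub (covers_cat (covers_fraction S k t pS ts' (le_trans ev v1)) cov) _.
  move=> x /andP[tx xv]; apply/orP.
  by case: (lerP x e) => xe; [left; rewrite tx | right; rewrite (ltW xe) xv].
rewrite /total_length big_cons /= -/(total_length L).
have share : s - t <= (e - t) / (1 + 2 * c).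
  by rewrite es addrAC; apply: gap_leq_fraction; lra.
apply: le_trans (lerD share tot) _.
by rewrite addrA -mulrDl [e - t + _]addrC subrKA lerD2l.
Qed.

Lemma interval_covers S u v d : 0 < d -> 0 <= u <= v -> v <= 1 ->
  exists E a L, covers S E a L (fun x => u <= x <= v) /\
    total_length L <= (v - u) / (1 + 2 * c) + d.
Proof.
move=> d0 uv v1; have c0 := c_gt0; have /andP[u0 u_le_v] := uv.
set S1 := maxn S.+1 (Num.truncn ((1 + 2 * c) / d)).+1.
have S10 : (0 < S1)%N by rewrite leq_max.
have SS1 : (S <= S1)%N by rewrite ltnW // leq_max ltnSn.
have err_le : (1 + 2 * c) / S1%:R <= d.
  have := truncnS_gt ((1 + 2 * c) / d); rewrite ltr_pdivrMr // => lt.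
  rewrite ler_pdivrMr ?ltr0n // [d * _]mulrC; apply: ltW (lt_le_trans lt _).
  by rewrite ler_pM2r // ler_nat leq_maxr.
have [E [S1E sumE]] := prime_recip_tail_unbounded (2 * c)^-1 S1.
have sum_ge : v - u <= \sum_(S1 <= p < S1 + (E - S1) | prime p) 2 * c / p%:R.
  have c2 : 0 < 2 * c by rewrite mulr_gt0.
  rewrite subnKC // -mulr_sumr; apply: (@le_trans _ _ 1); first lra.
  by rewrite -[X in X <= _](mulfV (lt0r_neq0 c2)) ler_pM2l.
have [a [L [cov tot]]] := sweep (E - S1) S1 u v S10 uv v1 sum_ge.
exists (S1 + (E - S1))%N, a, L; split; first exact: covers_widen SS1 (leqnn _) cov.
by apply: le_trans tot _; rewrite lerD2l.
Qed.

Lemma intervals_covers L S d : 0 < d -> unit_intervals L ->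
  exists E a L', covers S E a L' (in_intervals L) /\
    total_length L' <= total_length L / (1 + 2 * c) + d.
Proof.
elim: L S d => [|[u v] L IH] S d d0 /=.
  move=> _; exists S, (fun=> 0%N), [::]; split; first exact: covers_by_intervals.
  by rewrite /total_length !big_nil mul0r add0r ltW.
case/andP=> /and3P[u0 uv v1] unitL; have d2 : 0 < d / 2 by rewrite divr_gt0.
have u0v : 0 <= u <= v by rewrite u0.
have [E1 [a1 [L1 [cov1 tot1]]]] := interval_covers S u v (d / 2) d2 u0v v1.
have [E [a2 [L2 [cov2 tot2]]]] := IH E1 (d / 2) d2 unitL.
exists E, (splice E1 a1 a2), (L1 ++ L2).
split; first exact: covers_sub (covers_cat cov1 cov2) _.
rewrite /total_length big_cat big_cons /= -!/(total_length _) mulrDl.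
by move: tot1 tot2; rewrite -/(total_length L1) -/(total_length L2); lra.
Qed.

Lemma unit_interval_covers n S d : 0 < d ->
  exists E a L, covers S E a L (fun x => 0 <= x <= 1) /\
    total_length L <= (1 + 2 * c)^-1 ^+ n + n%:R * d.
Proof.
move=> d0; set r := (1 + 2 * c)^-1.
have r0 : 0 <= r by rewrite invr_ge0; have := c_gt0; lra.
have r1 : r <= 1 by rewrite invf_le1; have := c_gt0; lra.
elim: n S => [|n IH] S.
  exists S, (fun=> 0%N), [:: (0, 1)].
  split; first by apply: covers_interval; rewrite ?lexx ?ler01.
  by rewrite /total_length big_seq1 subr0 expr0 mul0r addr0.
have [E1 [a1 [L1 [cov1 tot1]]]] := IH S; have [_ _ unitL1 _] := cov1.
have [E [a2 [L2 [cov2 tot2]]]] := intervals_covers L1 E1 d d0 unitL1.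
exists E, (splice E1 a1 a2), L2; split; first exact: covers_trans cov1 cov2.
have -> : r ^+ n.+1 + n.+1%:R * d = r ^+ n * r + n%:R * d + d.
  by rewrite exprSr -natr1; ring.
apply: le_trans tot2 _; rewrite lerD2r.
apply: le_trans (_ : (r ^+ n + n%:R * d) * r <= _); first by rewrite ler_wpM2r.
by rewrite mulrDl lerD2l ler_piMr // mulr_ge0 // ltW.
Qed.

Lemma unit_interval_covers_small S e : 0 < e ->
  exists E a L, [/\ (S < E)%N, covers S E a L (fun x => 0 <= x <= 1) &
    total_length L <= e].
Proof.
move=> e0; have e2 : 0 < e / 2 by rewrite divr_gt0.
have [n rn] : exists n, (1 + 2 * c)^-1 ^+ n <= e / 2.
  by apply: exists_expr_le => //; rewrite invr_ge0 invf_lt1; have := c_gt0; lra.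
have d0 : 0 < e / 2 / n.+1%:R by rewrite divr_gt0.
have [E [a [L [cov tot]]]] := unit_interval_covers n S (e / 2 / n.+1%:R) d0.
exists E.+1, a, L; split; first by case: cov => /leq_ltn_trans->.
  exact: covers_widen (leqnn S) (leqnSn E) cov.
apply: le_trans tot _; rewrite [e in _ <= e](splitr e) lerD //.
rewrite mulrA ler_pdivrMr ?ltr0n // [X in _ <= X]mulrC.
by apply: ler_wpM2r; [exact: ltW | rewrite ler_nat].
Qed.

Lemma covers_chain : exists (st : nat -> nat) (ak : nat -> nat -> nat)
    (Lk : nat -> seq (R * R)), forall k, [/\ (st k < st k.+1)%N,
    covers (st k) (st k.+1) (ak k) (Lk k) (fun x => 0 <= x <= 1) &
    total_length (Lk k) <= k.+1%:R^-1].
Proof.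
have block (Sk : nat * nat) : exists t : nat * (nat -> nat) * seq (R * R),
    [/\ (Sk.1 < t.1.1)%N, covers Sk.1 t.1.1 t.1.2 t.2 (fun x => 0 <= x <= 1) &
        total_length t.2 <= Sk.2.+1%:R^-1].
  have k0 : 0 < Sk.2.+1%:R^-1 :> R by rewrite invr_gt0.
  have [E [a [L]]] := unit_interval_covers_small Sk.1 _ k0.
  by exists (E, a, L).
have [f fP] := choice block.
pose st := fix st k := if k is k'.+1 then (f (st k', k')).1.1 else 0%N.
by exists st, (fun k => (f (st k, k)).1.2), (fun k => (f (st k, k)).2) => k; exact: fP.
Qed.

Lemma finite_approximants_eventually_uncovered {st ak Lk x} :
  (forall k, (st k < st k.+1)%N) ->
  (forall k, covers (st k) (st k.+1) (ak k) (Lk k) (fun x => 0 <= x <= 1)) ->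
  0 <= x <= 1 ->
  finite_set [set p | prime p /\ `|x - (glue st ak p)%:R / p%:R| <= c / p%:R] ->
  exists N, forall k, in_intervals (Lk (N + k)%N) x.
Proof.
move=> st_lt cov x01 /finite_seqP[s sE]; set N := (\max_(p <- s) p).+1.
exists N => k; have [_ _ _ /(_ x x01)[[p [range pp px]]|//]] := cov (N + k)%N.
have ps : [set` s]%classic p by rewrite -sE; split; rewrite ?(glueE st_lt range).
have p_le_max : (p <= \max_(q <- s) q)%N := leq_bigmax_seq p ps isT.
case/andP: range => stp _; have := leq_trans (leq_addr k N) (leq_trans (leq_st st_lt _) stp).
by rewrite leqNgt ltnS p_le_max.
Qed.

End Approximation.
End Covering.

Local Open Scope classical_set_scope.
Local Open Scope ring_scope.

(* The sequence (a_p) indexed by primes is a function a : nat -> nat whose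
   values at non-primes are irrelevant. *)
Theorem theorem1p1 (R : realType) (c : R) (hc0 : 0 < c) (hc1 : c <= 2^-1) :
  exists a : nat -> nat,
    (forall p : nat, prime p -> (a p < p)%N) /\
    {ae (@lebesgue_measure R), forall x : R, x \in `[0, 1] ->
       ~ finite_set [set p : nat | prime p /\
                       `| x - (a p)%:R / p%:R | <= c / p%:R]}.
Proof.
have [st [ak [Lk chain]]] := covers_chain _ hc0.
have st_lt k : (st k < st k.+1)%N by case: (chain k).
have cov k : covers c (st k) (st k.+1) (ak k) (Lk k) (fun x => 0 <= x <= 1).
  by case: (chain k).
have unitL k : unit_intervals (Lk k) by case: (cov k).
have totL k : total_length (Lk k) <= k.+1%:R^-1 by case: (chain k).
exists (glue st ak); split => [p pp|].
  by case: (cov (block_index st p)) => _ red _ _; exact: red.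
have null N := negligible_eventually_in_intervals N unitL totL.
apply: negligibleS (negligible_bigcup null) => x /= /not_implyP[].
rewrite in_itv /= => x01 /contrapT fin.
have [N inL] := finite_approximants_eventually_uncovered c st_lt cov x01 fin.
by exists N => // k _; exact: inL.
Qed.
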